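(* Let $\Sigma$ be a finite alphabet and $w = w[1]w[2]\cdots w[n] \in \Sigma^*$ with $n \ge 1$. Algorithm A (described in the context) run on input $w$ returns TRUE if and only if $w \in L_{\mathrm{UNIQ}}$, i.e. if and only if $w$ is uniquely decodable from its bigrams.
   Context: Let $\$ \notin \Sigma$ be a delimiter symbol and $\Sigma_\$ = \Sigma \cup \{\$\}$. For a string $x \in \$\Sigma^*\$$, its bigram vector $\Phi(x) \in \mathbb{N}^{\Sigma_\$^2}$ records, for each pair $(c,d) \in \Sigma_\$^2$, the number of indices $j$ with $x[j]x[j+1] = cd$ (occurrences as a contiguous substring, counting overlaps). A string $w \in \Sigma^*$ is uniquely decodable, written $w \in L_{\mathrm{UNIQ}}$, if the only string $x \in \$\Sigma^*\$$ with $\Phi(x) = \Phi(\$w\$)$ is $x = \$w\$$. Algorithm A (input $w \in \Sigma^*$ of length $n$). It maintains: a ''visited'' flag for each $v \in \Sigma$; an ''on a cycle'' flag for each $v \in \Sigma$; and a directed graph $G$ with vertex set $\Sigma$ in which each ordered pair is either an edge or not. Initially no letter is visited, no letter is on a cycle, and $G$ has no edges. Mark $w[1]$ as visited. Then for $i = 2, \dots, n$: (1) If $w[i]$ has not been visited, mark it as visited. Otherwise, if the edge $w[i-1] \to w[i]$ is not already in $G$: if $w[i]$ is marked as on a cycle, return FALSE; otherwise mark $w[i]$ and all letters $w[j]$ for $j$ strictly between the previous occurrence of $w[i]$ (the largest $j_0 < i$ with $w[j_0] = w[i]$) and $i$ as on a cycle. (If the edge $w[i-1] \to w[i]$ is already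 in $G$, do nothing in this step.) (2) If there exist two distinct vertices $a, b \in \Sigma$ such that $a \to w[i]$ and $b \to w[i]$ are edges of $G$ and $a, b$ lie in the same strongly connected component of $G$ (where $a = w[i]$ or $b = w[i]$ is allowed), return FALSE. (3) Add the edge $w[i-1] \to w[i]$ to $G$. After the loop, return TRUE. *)

From mathcomp Require Import all_boot.
Set Implicit Arguments. Unset Strict Implicit. Unset Printing Implicit Defensive.

Section Bigrams.
Variable S : finType.

(* The delimiter-extended alphabet Sigma_$ is [option S]; [None] is $. *)
Definition delim (w : seq S) : seq (option S) := None :: rcons (map Some w) None.

Definition in_delim (x : seq (option S)) : Prop := exists u : seq S, x = delim u.

Definition bigram (x : seq (option S)) : {ffun option S * option S -> nat} :=
  [ffun cd => count (pred1 cd) (zip x (behead x))].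

Definition uniquely_decodable (w : seq S) : Prop :=
  forall x : seq (option S), in_delim x -> bigram x = bigram (delim w) -> x = delim w.

(* Algorithm A.  State: visited, on-cycle flags (as sets), graph G (edge set),
   processed prefix p = w[1..i-1] (nonempty). *)
Definition edge (G : {set S * S}) : rel S := fun a b => (a, b) \in G.

Fixpoint algA_loop (visited oncyc : {set S}) (G : {set S * S}) (p : seq S)
  (rest : seq S) : bool :=
  match rest with
  | [::] => true
  | c :: rest' =>
    let l := last c p in
    let step1 : option ({set S} * {set S}) :=
      if c \notin visited then Some (c |: visited, oncyc)
      else if (l, c) \notin G then
        if c \in oncyc then None
        else
          (* letters w[j] with j strictly between the previous occurrence of c and i *)
          let between := take (index c (rev p)) (rev p) in
          Some (visited, c |: (oncyc :|: [set y | y \in between]))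
      else Some (visited, oncyc) in
    match step1 with
    | None => false
    | Some (visited', oncyc') =>
      if [exists a : S, exists b : S,
            [&& a != b, edge G a c, edge G b c,
                connect (edge G) a b & connect (edge G) b a]]
      then false
      else
        algA_loop visited' oncyc' ((l, c) |: G) (rcons p c) rest'
    end
  end.

Definition algA (w : seq S) : bool :=
  match w with
  | [::] => true
  | x :: s => algA_loop [set x] set0 set0 [:: x] s
  end.

End Bigrams.

From mathcomp Require Import all_boot.
Set Implicit Arguments. Unset Strict Implicit. Unset Printing Implicit Defensive.

(* Words with the same bigram vector are the walks through the bigram graph with the same
   multiset of edges and the same endpoints.  If a walk visits z, then k, then z, then k
   again, its two z-to-k segments can be exchanged, and the result is a different word
   whenever the two segments end with different letters.  A failure of step (1) or (2) of
   Algorithm A at position i yields such a pair of segments in w[1..i].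
   Conversely, if neither step fails, another decoding of w[1..i] either decodes
   w[1..i-1] differently, or it enters c = w[i] from d <> w[i-1]; then either the edge
   w[i-1] -> c is old and d, w[i-1] lie in one strongly connected component, or it is
   new and the rest of that decoding closes a cycle through c.  Algorithm A keeps the
   graph of bigrams of the prefix read so far, and its "on a cycle" marks lie between
   the cycle vertices of that graph and the letters sandwiched between two equal letters.
   Since unique decodability is inherited by prefixes, the loop answers TRUE exactly on
   uniquely decodable words. *)

Definition bigrams (T : Type) (s : seq T) : seq (T * T) := zip s (behead s).

Section BigramList.
Variable T : eqType.
Implicit Types (s : seq T) (x y z k : T).

Lemma size_bigrams s : size (bigrams s) = (size s).-1.
Proof. by case: s => //= x s; rewrite size_zip (minn_idPr (leqnSn _)). Qed.

Lemma bigrams_cat x s t :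
  bigrams (x :: s ++ t) = bigrams (x :: s) ++ bigrams (last x s :: t).
Proof. by elim: s x => [|y s IH] x //=; rewrite -IH. Qed.

Lemma bigrams_cat_cons s1 x s2 :
  bigrams (s1 ++ x :: s2) = bigrams (rcons s1 x) ++ bigrams (x :: s2).
Proof. by elim: s1 => [|y [|z s1] IH] //=; rewrite -IH. Qed.

Lemma bigrams_rcons s x : s != [::] ->
  bigrams (rcons s x) = rcons (bigrams s) (last x s, x).
Proof. by case: s => // y s _; elim: s y => [|z s IH] y //=; rewrite -IH. Qed.

Lemma bigrams_map (U : eqType) (f : T -> U) s :
  bigrams (map f s) = map (fun ab => (f ab.1, f ab.2)) (bigrams s).
Proof. by elim: s => [|x [|y s] IH] //=; rewrite -IH. Qed.

Lemma mem_bigrams x y s : (x, y) \in bigrams s -> (x \in s) && (y \in s).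
Proof.
elim: s => [|z [|t s] IH] //=; rewrite inE => /orP[/eqP[-> ->]|/IH].
  by rewrite !inE !eqxx orbT.
by rewrite !inE => /andP[-> ->]; rewrite !orbT.
Qed.

Lemma bigramsP x y s :
  reflect (exists s1 s2, s = s1 ++ x :: y :: s2) ((x, y) \in bigrams s).
Proof.
apply: (iffP idP) => [|[s1 [s2 ->]]]; last first.
  by rewrite bigrams_cat_cons mem_cat /= inE eqxx orbT.
elim: s => [|z [|t s] IH] //=; rewrite inE => /orP[/eqP[-> ->]|/IH[s1 [s2 E]]].
  by exists [::], s.
by exists (z :: s1), s2; rewrite E.
Qed.

Lemma mem_bigrams_cat_cons A z B x y : (x, y) \in bigrams (A ++ z :: B) ->
  [\/ (x \in A) && (y \in A), x = last z A /\ y = z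
    | (x \in z :: B) && (y \in z :: B)].
Proof.
rewrite bigrams_cat_cons mem_cat => /orP[|/mem_bigrams]; last by constructor 3.
case: A => [//|a A]; rewrite bigrams_rcons // mem_rcons inE.
by case/orP=> [/eqP[-> ->]|/mem_bigrams]; [constructor 2 | constructor 1].
Qed.

Lemma mem_bigrams_last A z B : A != [::] -> (last z A, z) \in bigrams (A ++ z :: B).
Proof.
by move=> nzA; rewrite bigrams_cat_cons bigrams_rcons // mem_cat mem_rcons mem_head.
Qed.

Lemma perm_bigrams_swap P X K Y R z k : last k K = z ->
  perm_eq (bigrams (P ++ z :: X ++ k :: K ++ Y ++ k :: R))
          (bigrams (P ++ z :: Y ++ k :: K ++ X ++ k :: R)).
Proof.
move=> Kz; have loopK W : k :: K ++ W = belast k K ++ z :: W.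
  by rewrite -cat_rcons -Kz -lastI.
rewrite !(bigrams_cat_cons P) !(bigrams_cat_cons (z :: _) k) !loopK.
rewrite !(bigrams_cat_cons (belast k K)) !(bigrams_cat_cons (z :: _) k) perm_cat2l.
by rewrite perm_catCA perm_sym perm_catCA perm_cat2l perm_catCA.
Qed.

Lemma perm_rcons_neq s t x y : x != y -> perm_eq (rcons s x) (rcons t y) ->
  exists r, perm_eq s (y :: r) /\ perm_eq t (x :: r).
Proof.
move=> xy; rewrite perm_rcons perm_sym perm_rcons => yt_xs.
have ys : y \in s by have := perm_mem yt_xs y; rewrite !inE eqxx eq_sym (negbTE xy).
exists (rem y s); split; first exact: perm_to_rem.
rewrite -(perm_cons y) (permPl yt_xs) (@perm_trans _ (x :: y :: rem y s)) //.
  by rewrite perm_cons perm_to_rem.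
by apply/permP => q /=; rewrite addnCA.
Qed.

Lemma split_last_occurrence (p : seq T) c : c \in p ->
  exists A B, p = A ++ c :: B /\ take (index c (rev p)) (rev p) = rev B.
Proof.
rewrite -mem_rev => cr; set r := rev p; set i := index c r.
have ri : r = take i r ++ c :: drop i.+1 r.
  by rewrite -[c in c :: _](nth_index c cr) -drop_nth ?cat_take_drop ?index_mem.
exists (rev (drop i.+1 r)), (rev (take i r)); rewrite revK; split=> //.
by rewrite -[p]revK -/r {1}ri rev_cat rev_cons cat_rcons.
Qed.

End BigramList.

Section Reachability.
Variables (T : finType) (e : rel T).

Definition on_cycle (v : T) : bool := [exists u, e u v && connect e v u].

Definition scc_merge (c : T) : bool :=
  [exists a, exists b, [&& a != b, e a c, e b c, connect e a b & connect e b a]].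

Lemma connect_invariant (P : pred T) x y :
  (forall u v, P u -> e u v -> P v) -> P x -> connect e x y -> P y.
Proof.
move=> closedP Px /connectP[s + ->]; elim: s x Px => //= z s IH x Px /andP[exz].
exact/IH/(closedP x).
Qed.

Lemma connect_sink c v : (forall z, ~~ e c z) -> connect e c v -> v = c.
Proof.
move=> sink cv; apply/eqP; apply: (connect_invariant (P := pred1 c)) cv => //= u z /eqP->.
by rewrite (negbTE (sink z)).
Qed.

Lemma sink_not_on_cycle c : (forall z, ~~ e c z) -> ~~ on_cycle c.
Proof.
move=> sink; apply/existsP => -[u /andP[uc /(connect_sink sink) uE]].
by move: (sink c); rewrite -{1}uE uc.
Qed.

Lemma bigrams_path x s : (forall a b, (a, b) \in bigrams (x :: s) -> e a b) -> path e x s.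
Proof.
elim: s x => //= y s IH x exs; rewrite exs ?mem_head //.
by apply: IH => a b ab; rewrite exs // inE ab orbT.
Qed.

Lemma path_connect_last x s : path e x s -> {in x :: s, forall y, connect e y (last x s)}.
Proof.
move=> ps y ys; case/splitPl: ys ps => s1 s2 <-.
rewrite cat_path last_cat => /andP[_ ps2]; exact: (path_connect ps2 (mem_last _ _)).
Qed.

End Reachability.

Section AddEdge.
Variables (T : finType) (G : {set T * T}) (l c : T).

Lemma connect_setU1 x y : connect (edge ((l, c) |: G)) x y ->
  connect (edge G) x y \/ connect (edge G) c y.
Proof.
case/connectP => s + ->; elim: s x => [|z s IH] x /=; first by left.
case/andP; rewrite /edge in_setU1 => exz /IH[zy|]; last by right.
case/orP: exz => [/eqP[_ <-]|exz]; first by right.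
by left; apply: connect_trans zy; apply: connect1.
Qed.

Lemma on_cycle_setU1 v : on_cycle (edge ((l, c) |: G)) v ->
  [\/ on_cycle (edge G) v, v = c | connect (edge G) c v].
Proof.
case/existsP => u /andP[]; rewrite /edge in_setU1 => /orP[/eqP[_ ->]|euv].
  by constructor 2.
case/connect_setU1 => [vu|cu]; last by constructor 3; apply: connect_trans cu (connect1 euv).
by constructor 1; apply/existsP; exists u; rewrite /edge euv.
Qed.

End AddEdge.

Section Decoding.
Variable S : finType.
Implicit Types (x z k c : S) (s t u w A B : seq S).

Definition lift_bigram (ab : S * S) : option S * option S := (Some ab.1, Some ab.2).

Lemma bigrams_delim x s : bigrams (delim (x :: s)) =
  (None, Some x) :: rcons (map lift_bigram (bigrams (x :: s))) (Some (last x s), None).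
Proof.
transitivity ((None, Some x) :: bigrams (rcons (map Some (x :: s)) None)); first by [].
by rewrite bigrams_rcons // bigrams_map [last _ _]/= last_map.
Qed.

Lemma mem_bigrams_delim_l x s a :
  ((None, a) \in bigrams (delim (x :: s))) = (a == Some x).
Proof.
have /negbTE lifted : (None, a) \notin map lift_bigram (bigrams (x :: s)).
  by apply/mapP => -[[? ?] _ []].
rewrite bigrams_delim !(inE, mem_rcons) lifted !xpair_eqE eqxx orbF.
by case: a lifted => [?|] _ /=; rewrite ?andbF ?orbF.
Qed.

Lemma mem_bigrams_delim_r x s a :
  ((a, None) \in bigrams (delim (x :: s))) = (a == Some (last x s)).
Proof.
have /negbTE lifted : (a, None) \notin map lift_bigram (bigrams (x :: s)).
  by apply/mapP => -[[? ?] _ []].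
by rewrite bigrams_delim !(inE, mem_rcons) lifted !xpair_eqE eqxx andbT orbF; case: a lifted.
Qed.

Lemma delim_inj : injective (@delim S).
Proof. by move=> u v [] /rcons_inj[] /inj_map; apply; exact: Some_inj. Qed.

Lemma udP w : uniquely_decodable w <->
  forall u, perm_eq (bigrams (delim u)) (bigrams (delim w)) -> u = w.
Proof.
split=> [ud u uw | ud _ [u ->] uw].
  apply/delim_inj/ud; first by exists u.
  by apply/ffunP => cd; rewrite !ffunE; apply/permP.
congr delim; apply: ud; apply/allP => cd _ /=.
by move/ffunP/(_ cd): uw; rewrite !ffunE => ->.
Qed.

Lemma ud_cons x s : uniquely_decodable (x :: s) <->
  forall t, last x t = last x s -> perm_eq (bigrams (x :: t)) (bigrams (x :: s)) -> t = s.
Proof.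
split=> [/udP ud t ts st | ud].
  suff [] : x :: t = x :: s by [].
  by apply: ud; rewrite !bigrams_delim ts perm_cons -!cats1 perm_cat2r perm_map.
apply/udP => -[|y t] yt.
  by have := perm_size yt; rewrite !size_bigrams /= size_rcons.
have Ey : y = x.
  apply/Some_inj/eqP; rewrite -(mem_bigrams_delim_l x s) -(perm_mem yt).
  by rewrite mem_bigrams_delim_l.
have Et : last y t = last x s.
  apply/Some_inj/eqP; rewrite -(mem_bigrams_delim_r x s) -(perm_mem yt).
  by rewrite mem_bigrams_delim_r.
subst y; congr (_ :: _); apply: ud => //.
move: yt; rewrite !bigrams_delim Et perm_cons -!cats1 perm_cat2r.
by apply: perm_map_inj => -[? ?] [? ?] [-> ->].
Qed.

Lemma ud_nil : uniquely_decodable (Nil S).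
Proof. by apply/udP => -[] // ? ? /perm_size; rewrite !size_bigrams /= size_rcons. Qed.

Lemma ud_seq1 x : uniquely_decodable [:: x].
Proof. by apply/ud_cons => -[] // ? ? _ /perm_size. Qed.

Lemma ud_catl s t : uniquely_decodable (s ++ t) -> uniquely_decodable s.
Proof.
case: s => [_|x s /ud_cons ud]; first exact: ud_nil.
apply/ud_cons => s' ls ps.
have /eqP : s' ++ t = s ++ t by apply: ud; rewrite ?last_cat ?bigrams_cat ls ?perm_cat2r.
rewrite eqseq_cat => [/andP[/eqP]|] //.
by have := perm_size ps; rewrite !size_bigrams.
Qed.

Lemma not_ud_swap P X K Y R z k : last k K = z -> last z X != last z Y ->
  ~ uniquely_decodable (P ++ z :: X ++ k :: K ++ Y ++ k :: R).
Proof.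
move=> Kz neq /udP ud.
have : P ++ z :: Y ++ k :: K ++ X ++ k :: R = P ++ z :: X ++ k :: K ++ Y ++ k :: R.
  apply: ud; rewrite /delim !(map_cat, map_cons, rcons_cat, rcons_cons) -cat_cons perm_sym.
  by apply: perm_bigrams_swap; rewrite last_map Kz.
have split_last W V :
    P ++ z :: W ++ k :: K ++ V ++ k :: R = (P ++ z :: W ++ k :: K ++ V) ++ k :: R.
  by rewrite -catA /= -catA /= -catA.
rewrite !split_last => E; move/eqP: (E); rewrite eqseq_cat; last first.
  by move/(congr1 size): E; rewrite !size_cat => /addIn.
case/andP=> /eqP/(congr1 (last z)) + _; rewrite !(last_cat, last_cons) Kz => /eqP.
by rewrite (negbTE neq).
Qed.

Lemma not_ud_repeat A c B : has (mem (c :: B)) A -> last c A != last c B ->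
  ~ uniquely_decodable (rcons (A ++ c :: B) c).
Proof.
case/hasP=> z; case/splitPr=> A1 A2; case/splitPl=> K Y Kz.
rewrite rcons_cat rcons_cons rcons_cat !(last_cat, last_cons) Kz -cats1 -catA.
exact: not_ud_swap.
Qed.

End Decoding.

Section BigramGraph.
Variable S : finType.
Implicit Types (c : S) (p A B : seq S).

Definition bigram_graph p : {set S * S} := [set ab in bigrams p].

Lemma mem_bigram_graph p ab : (ab \in bigram_graph p) = (ab \in bigrams p).
Proof. by rewrite inE. Qed.

Lemma edge_bigram_graph p a b : edge (bigram_graph p) a b = ((a, b) \in bigrams p).
Proof. exact: mem_bigram_graph. Qed.

Lemma bigram_graph_rcons p c : p != [::] ->
  bigram_graph (rcons p c) = (last c p, c) |: bigram_graph p.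
Proof.
by move=> nzp; apply/setP => ab; rewrite in_setU1 !inE bigrams_rcons // mem_rcons inE.
Qed.

(* Every letter marked "on a cycle" by step (1) of Algorithm A is sandwiched. *)
Definition sandwiched p v : Prop := exists A B, p = A ++ v :: B /\ has (mem (v :: B)) A.

Lemma sandwiched_rcons p c v : sandwiched p v -> sandwiched (rcons p c) v.
Proof.
case=> A [B [-> meet]]; exists A, (rcons B c); split; first by rewrite rcons_cat.
case/hasP: meet => z zA zB; apply/hasP; exists z => //.
by move: zB; rewrite !inE mem_rcons inE => /orP[->|->]; rewrite ?orbT.
Qed.

Lemma not_ud_sandwiched p c : sandwiched p c -> (last c p, c) \notin bigrams p ->
  ~ uniquely_decodable (rcons p c).
Proof.
case=> A [B [-> meet]] notin; have nzA : A != [::] by case: (A) meet.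
apply: not_ud_repeat meet _; apply: contraNneq notin => eqAB.
by rewrite last_cat last_cons -eqAB mem_bigrams_last.
Qed.

Lemma not_ud_scc_merge p c : scc_merge (edge (bigram_graph p)) c ->
  ~ uniquely_decodable (rcons p c).
Proof.
case/existsP=> a /existsP[b /and5P[ab ac bc cab cba]].
wlog al : a b ab ac bc cab cba / a != last c p.
  move=> wlogH; have [al|] := eqVneq a (last c p); last exact: (wlogH a b).
  by apply: (wlogH b a); rewrite // eq_sym -?al.
move: ac; rewrite edge_bigram_graph => /bigramsP[A [B pE]].
have {}pE : p = rcons A a ++ c :: B by rewrite cat_rcons.
have [meet|/hasPn disj] := boolP (has (mem (c :: B)) (rcons A a)).
  by rewrite pE; apply: not_ud_repeat meet _; rewrite last_rcons; rewrite pE last_cat in al.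
(* Otherwise a -> c is the only edge from rcons A a into c :: B, which no edge leaves. *)
have {}disj y : y \in rcons A a -> y \in c :: B -> False by move=> /disj/negP.
have closedB y z : y \in c :: B -> edge (bigram_graph p) y z -> z \in c :: B.
  move=> yB; rewrite edge_bigram_graph pE.
  case/mem_bigrams_cat_cons=> [/andP[yA _]|[_ ->]|/andP[]//]; last exact: mem_head.
  by case: (disj y).
have bB : b \in c :: B.
  move: bc; rewrite edge_bigram_graph pE.
  case/mem_bigrams_cat_cons=> [/andP[_ cA]|[]|/andP[]//].
    by case: (disj c cA (mem_head _ _)).
  by rewrite last_rcons => ba; rewrite ba eqxx in ab.
case: (disj a); first by rewrite mem_rcons mem_head.
exact: (connect_invariant (P := mem (c :: B)) closedB bB cba).
Qed.

Lemma ud_rcons p c : uniquely_decodable p -> ~~ scc_merge (edge (bigram_graph p)) c ->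
  (last c p, c) \in bigrams p \/ ~~ on_cycle (edge (bigram_graph p)) c ->
  uniquely_decodable (rcons p c).
Proof.
case: p => [_ _ _|x s]; first exact: ud_seq1.
set l := last c (x :: s); move=> /ud_cons ud no_merge old_or_acyclic.
rewrite rcons_cons; apply/ud_cons => t; case/lastP: t => [_ /perm_size|t c'].
  by rewrite !size_bigrams /= size_rcons.
rewrite !last_rcons => ->; set d := last x t.
rewrite -!rcons_cons (bigrams_rcons (s := x :: t)) // (bigrams_rcons (s := x :: s)) //.
change (last c (x :: t)) with d; rewrite -/l => pt.
have [dl|dl] := eqVneq d l.
  by congr rcons; apply: ud => //; move: pt; rewrite dl -!cats1 perm_cat2r.
have [r [tr sr]] : exists r, perm_eq (bigrams (x :: t)) ((l, c) :: r) /\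
                              perm_eq (bigrams (x :: s)) ((d, c) :: r).
  by apply: perm_rcons_neq pt; rewrite xpair_eqE eqxx andbT.
have in_s ab : ab \in r -> ab \in bigrams (x :: s).
  by rewrite (perm_mem sr) inE => ->; rewrite orbT.
have dc : (d, c) \in bigrams (x :: s) by rewrite (perm_mem sr) mem_head.
have lc : (l, c) \in bigrams (x :: t) by rewrite (perm_mem tr) mem_head.
case: old_or_acyclic => [lc_old | /negP[]].
  have path_t : path (edge (bigram_graph (x :: s))) x t.
    apply: bigrams_path => a b.
    by rewrite edge_bigram_graph (perm_mem tr) inE => /orP[/eqP[-> ->]|/in_s].
  have path_s : path (edge (bigram_graph (x :: s))) x s.
    by apply: bigrams_path => a b; rewrite edge_bigram_graph.
  have [/(path_connect_last path_t) ld _] := andP (mem_bigrams lc).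
  have [_ /(path_connect_last path_s) cl] := andP (mem_bigrams dc).
  case/negP: no_merge; apply/existsP; exists l; apply/existsP; exists d.
  rewrite eq_sym dl !edge_bigram_graph lc_old dc ld /=.
  by apply: connect_trans cl; apply: connect1; rewrite edge_bigram_graph.
(* The new edge l -> c occurs once in x :: t; the walk after it returns from c to d. *)
case/bigramsP: lc => A [B tE].
have path_B : path (edge (bigram_graph (x :: s))) c B.
  apply: bigrams_path => a b; rewrite edge_bigram_graph => ab; apply: in_s.
  move: tr; rewrite tE bigrams_cat_cons -[bigrams (l :: c :: B)]/((l, c) :: bigrams (c :: B)).
  by rewrite (perm_catCA _ [:: (l, c)]) perm_cons => /perm_mem <-; rewrite mem_cat ab orbT.
have dB : d = last c B by rewrite /d -(last_cons x x t) tE last_cat !last_cons.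
apply/existsP; exists d; rewrite edge_bigram_graph dc dB.
exact: (path_connect_last path_B (mem_head c B)).
Qed.

Lemma connect_last_occurrence p A c B v : ~~ on_cycle (edge (bigram_graph p)) c ->
  p = A ++ c :: B -> connect (edge (bigram_graph p)) c v -> v \in c :: B.
Proof.
move=> acyclic pE; apply: (connect_invariant (P := mem (c :: B))) (mem_head c B) => y z yB.
rewrite edge_bigram_graph pE => /mem_bigrams_cat_cons[/andP[yA _]|[_ ->]|/andP[]//].
  case/negP: acyclic; case: A yA pE => // a A yA pE.
  have path_cB : path (edge (bigram_graph p)) c B.
    apply: bigrams_path => ? ? ab.
    by rewrite edge_bigram_graph pE bigrams_cat_cons mem_cat ab orbT.
  have path_A : path (edge (bigram_graph p)) a A.
    apply: bigrams_path => ? ? ab; rewrite edge_bigram_graph pE bigrams_cat_cons mem_cat.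
    by rewrite (bigrams_rcons (s := a :: A)) // mem_rcons inE ab orbT.
  apply/existsP; exists (last c (a :: A)); apply/andP; split.
    by rewrite edge_bigram_graph pE mem_bigrams_last.
  exact: connect_trans (path_connect path_cB yB) (path_connect_last path_A yA).
exact: mem_head.
Qed.

End BigramGraph.

Section AlgorithmA.
Variable S : finType.
Implicit Types (c : S) (p : seq S) (vis onc : {set S}).

Definition algA_invariant vis onc p : Prop :=
  [/\ p != [::], vis =i p, (forall v, v \in onc -> sandwiched p v) &
      (forall v, on_cycle (edge (bigram_graph p)) v -> v \in onc)].

Lemma invariant_fresh vis onc p c : algA_invariant vis onc p -> c \notin p ->
  algA_invariant (c |: vis) onc (rcons p c).
Proof.
case=> nzp vis_p onc_sandwiched cycles_onc cp.
split=> [||v /onc_sandwiched/sandwiched_rcons //|v].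
- by case: (p).
- by move=> v; rewrite in_setU1 mem_rcons inE vis_p.
have lp : last c p \in p by case: (p) nzp => // x s _; exact: (mem_last x s).
have sink z : ~~ edge (bigram_graph (rcons p c)) c z.
  rewrite bigram_graph_rcons // /edge in_setU1 mem_bigram_graph xpair_eqE negb_or.
  apply/andP; split; last by apply: contraNN cp => /mem_bigrams/andP[].
  by apply: contraNN cp => /andP[/eqP-> _]; exact: lp.
have [->|vc] := eqVneq v c; first by rewrite (negbTE (sink_not_on_cycle sink)).
rewrite bigram_graph_rcons // => /on_cycle_setU1[/cycles_onc //|vc'|cv].
  by rewrite vc' eqxx in vc.
suff vc' : v = c by rewrite vc' eqxx in vc.
apply: connect_sink cv => z; apply: contraNN (sink z).
by rewrite bigram_graph_rcons // /edge in_setU1 => ->; rewrite orbT.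
Qed.

Lemma invariant_old_edge vis onc p c : algA_invariant vis onc p -> c \in p ->
  (last c p, c) \in bigrams p -> algA_invariant vis onc (rcons p c).
Proof.
case=> nzp vis_p onc_sandwiched cycles_onc cp lc.
split=> [||v /onc_sandwiched/sandwiched_rcons //|].
- by case: (p).
- by move=> v; rewrite mem_rcons inE vis_p; case: eqP => // ->.
suff -> : bigram_graph (rcons p c) = bigram_graph p by [].
by rewrite bigram_graph_rcons //; apply/setUidPr; rewrite sub1set mem_bigram_graph.
Qed.

Lemma invariant_new_edge vis onc p c :
  algA_invariant vis onc p -> c \in p -> c \notin onc ->
  algA_invariant vis (c |: (onc :|: [set y | y \in take (index c (rev p)) (rev p)]))
                 (rcons p c).
Proof.
case=> nzp vis_p onc_sandwiched cycles_onc cp conc.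
have [A [B [pE ->]]] := split_last_occurrence cp.
have acyclic : ~~ on_cycle (edge (bigram_graph p)) c by apply: contra conc; apply: cycles_onc.
split=> [||v|v].
- by case: (p).
- by move=> v; rewrite mem_rcons inE vis_p; case: eqP => // ->.
- rewrite !inE mem_rev => /or3P[/eqP->|/onc_sandwiched/sandwiched_rcons //|vB].
    by exists p, [::]; split; rewrite ?cats1 //; apply/hasP; exists c; rewrite ?inE.
  case/splitPr: vB pE => B1 B2 pE; exists (A ++ c :: B1), (rcons B2 c).
  rewrite pE rcons_cat rcons_cons rcons_cat -catA; split=> //; apply/hasP; exists c.
    by rewrite mem_cat mem_head orbT.
  by rewrite inE -rcons_cons mem_rcons mem_head.
rewrite bigram_graph_rcons // !inE mem_rev.
case/on_cycle_setU1=> [/cycles_onc->|->|]; rewrite ?eqxx ?orbT //.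
by move/(connect_last_occurrence acyclic pE); rewrite inE => /orP[->|->]; rewrite ?orbT.
Qed.

Lemma algA_loopP rest vis onc p : algA_invariant vis onc p -> uniquely_decodable p ->
  algA_loop vis onc (bigram_graph p) p rest <-> uniquely_decodable (p ++ rest).
Proof.
elim: rest vis onc p => [|c rest IH] vis onc p inv ud /=; first by rewrite cats0.
case: (inv) => nzp vis_p onc_sandwiched cycles_onc.
rewrite -bigram_graph_rcons // -cat_rcons -/(scc_merge (edge (bigram_graph p)) c).
have continue vis' onc' : algA_invariant vis' onc' (rcons p c) ->
    (last c p, c) \in bigrams p \/ ~~ on_cycle (edge (bigram_graph p)) c ->
    (if scc_merge (edge (bigram_graph p)) c then false
     else algA_loop vis' onc' (bigram_graph (rcons p c)) (rcons p c) rest) <->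
    uniquely_decodable (rcons p c ++ rest).
  move=> inv' old_or_acyclic; case: ifPn => [merge | no_merge].
    by split=> // /ud_catl/(not_ud_scc_merge merge).
  exact/IH/ud_rcons.
rewrite vis_p mem_bigram_graph.
have [cp|cp] := boolP (c \in p) => /=; last first.
  apply: continue; first exact: invariant_fresh.
  right; apply: contra cp => /existsP[u /andP[+ _]].
  by rewrite edge_bigram_graph => /mem_bigrams/andP[].
have [lc|lc] := boolP ((last c p, c) \in bigrams p) => /=.
  by apply: continue; [exact: invariant_old_edge | left].
have [conc|conc] := boolP (c \in onc).
  by split=> // /ud_catl/(not_ud_sandwiched (onc_sandwiched c conc) lc).
apply: continue; first exact: invariant_new_edge.
by right; apply: contra conc; apply: cycles_onc.
Qed.

End AlgorithmA.

Theorem theorem2 (S : finType) (w : seq S) :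
  0 < size w -> (algA w = true <-> uniquely_decodable w).
Proof.
case: w => [//|x s] _.
have -> : algA (x :: s) = algA_loop [set x] set0 (bigram_graph [:: x]) [:: x] s.
  by congr algA_loop; apply/setP => ab; rewrite !inE.
have inv : algA_invariant [set x] set0 [:: x].
  split=> // [v|v|v]; first by rewrite !inE.
    by rewrite inE.
  by case/existsP => u; rewrite edge_bigram_graph.
exact (algA_loopP s inv (@ud_seq1 _ x)).
Qed.
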